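(* For distinct sets $X,Y\in\mathcal{X}_2$, the inclusion $X\subset Y$ holds if and only if $X\subseteq1+4\mathbb{N}_0$ and $i(Y)<i(X)$.
   Context: $\mathbb{N}=\{1,2,\dots\}$, $\mathbb{N}_0=\{0\}\cup\mathbb{N}$, $x^{\mathbb{N}}=\{x^k:k\in\mathbb{N}\}$. $\mathcal{X}_2=\{\overline{a^{\mathbb{N}}}:a\in\mathbb{N}\setminus2\mathbb{N},\ a\ne1\}$, closures taken in the $2$-adic topology on $\mathbb{N}\setminus2\mathbb{N}$ (generated by the sets $x+2^m\mathbb{N}_0$). $\mathbb{Z}_{2^m}^\times$ is the unit group of $\mathbb{Z}/2^m\mathbb{Z}$, $\pi_m:\mathbb{N}\to\mathbb{Z}/2^m\mathbb{Z}$, $x\mapsto x+2^m\mathbb{Z}$. For $X\in\mathcal{X}_2$, $n(X)=\min\{m\in\mathbb{N}:X=\pi_m^{-1}(\pi_m(X)),\ |\pi_m(X)|\ge3\}$ and $i(X)$ is the index of the subgroup $\pi_{n(X)}(X)$ in $\mathbb{Z}_{2^{n(X)}}^\times$. *)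

From mathcomp Require Import all_boot all_order all_algebra all_fingroup all_solvable.
From mathcomp Require Import boolp.
From Stdlib Require Import ClassicalEpsilon.

Set Implicit Arguments.
Unset Strict Implicit.
Unset Printing Implicit Defensive.

(* Closure of S in the 2-adic topology on N \ 2N, generated by the sets
   x + 2^m N_0 (x odd): x is in the closure iff x is odd and every basic
   neighbourhood x + 2^m N_0 of x meets S. *)
Definition clos2 (S : nat -> Prop) (x : nat) : Prop :=
  odd x /\ forall m : nat, exists s, S s /\ exists k : nat, s = x + 2 ^ m * k.

Definition powset (a : nat) (s : nat) : Prop := exists k, 0 < k /\ s = a ^ k.

Definition inX2 (X : nat -> Prop) : Prop :=
  exists a : nat, odd a /\ a <> 1 /\ X = clos2 (powset a).

(* pi_m(X) as a subset of Z/2^mZ (used for m >= 1) *)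
Definition piset (X : nat -> Prop) (m : nat) : {set 'Z_(2 ^ m)} :=
  [set r : 'Z_(2 ^ m) | `[< exists x, X x /\ inZp x = r >]].

Definition nprop (X : nat -> Prop) (m : nat) : Prop :=
  0 < m /\
  (forall y : nat, 0 < y -> (X y <-> exists x, X x /\ (inZp y : 'Z_(2 ^ m)) = inZp x)) /\
  3 <= #|piset X m|.

Definition nX (X : nat -> Prop) : nat :=
  epsilon (inhabits 0) (fun m => nprop X m /\ forall k, nprop X k -> m <= k).

Definition piunits (X : nat -> Prop) (n : nat) : {set {unit 'Z_(2 ^ n)}} :=
  [set u : {unit 'Z_(2 ^ n)} | val u \in piset X n].

Definition iX (X : nat -> Prop) : nat :=
  #| units_Zp (2 ^ nX X) : piunits X (nX X) |%g.

(* Write t = v2sq a for the 2-adic valuation of a^2 - 1 (t >= 3 for odd a <> 1).  Since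
   (1 + 2^t w)^(2^d) = 1 + 2^(t+d) * odd, the powers of a^2 reach every class mod 2^m that
   is 1 mod 2^t, so the closure of a^N is {x : x = 1 or a (mod 2^t)}.  This set projects onto
   at most two classes mod 2^m for m <= t and onto four classes mod 2^(t+1), whence
   n(X) = t + 1 and i(X) = 2^(t-2).  If a = 1 (mod 4) the closure is 1 + 2^(t-1) N_0; if
   a = 3 (mod 4) its elements that are 1 mod 4 form 1 + 2^t N_0.  An inclusion X ⊆ Y thus
   compares the levels, and the only delicate case, a = b = 3 (mod 4), is settled by
   a = b (mod 2^s) => a^2 = b^2 (mod 2^(s+1)), which forces equal levels and X = Y. *)

From mathcomp Require Import all_boot all_order all_algebra all_fingroup all_solvable.
From mathcomp Require Import boolp zify ring.
From Stdlib Require Import ClassicalEpsilon.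

Set Implicit Arguments.
Unset Strict Implicit.
Unset Printing Implicit Defensive.

Lemma eq_modn_dvd d m x y : d %| m -> x = y %[mod m] -> x = y %[mod d].
Proof. by move=> dm E; rewrite -(modn_dvdm x dm) E modn_dvdm. Qed.

Lemma eq_mod_pow2_le k t x y : k <= t -> x = y %[mod 2 ^ t] -> x = y %[mod 2 ^ k].
Proof. by move/(dvdn_exp2l 2); apply: eq_modn_dvd. Qed.

Lemma odd_eq_mod_pow2 t x y : 0 < t -> x = y %[mod 2 ^ t] -> odd x = odd y.
Proof. by move=> t0 /(eq_mod_pow2_le t0); rewrite !modn2 => /eqP; case: odd; case: odd. Qed.

Lemma modn_double x d : 0 < d -> x %% (2 * d) = x %% d + odd (x %/ d) * d.
Proof.
move=> d0; set q := x %/ d.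
have Ex : x = q./2 * (2 * d) + (x %% d + odd q * d).
  by rewrite {1}(divn_eq x d) -/q -{1}(odd_double_half q) -mul2n; ring.
rewrite {1}Ex modnMDl modn_small //.
by have := ltn_pmod x d0; case: odd; lia.
Qed.

Lemma eq_mod_pow2S t x y :
  x = y %[mod 2 ^ t] -> x = y %[mod 2 ^ t.+1] \/ x = y + 2 ^ t %[mod 2 ^ t.+1].
Proof.
have P0 : 0 < 2 ^ t by rewrite expn_gt0.
rewrite expnS !modn_double // modnDr divnDr // divnn P0 addn1 oddS => ->.
by case: (odd (x %/ 2 ^ t)); case: (odd (y %/ 2 ^ t)); auto.
Qed.

Lemma pow2_mod_pow2S n u : odd u -> 2 ^ n * u = 2 ^ n %[mod 2 ^ n.+1].
Proof.
move=> ou; rewrite -[u]odd_double_half ou -mul2n mulnDr muln1 mulnA -expnSr.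
by rewrite addnC [2 ^ n.+1 * _]mulnC modnMDl.
Qed.

Lemma neq_mod_add_pow2 t x : x != x + 2 ^ t %[mod 2 ^ t.+1].
Proof.
by rewrite -{1}[x]addn0 eqn_modDl mod0n modn_small ?ltn_exp2l // eq_sym -lt0n expn_gt0.
Qed.

Lemma pow2_le_of_mod1 j k :
  (forall x, x = 1 %[mod 2 ^ k] -> x = 1 %[mod 2 ^ j]) -> j <= k.
Proof.
move=> /(_ (2 ^ k + 1) (modnDl _ _)) /eqP.
by rewrite -[X in _ == X %[mod _]]add0n eqn_modDr mod0n -/(dvdn _ _) dvdn_Pexp2l.
Qed.

Lemma sqr_eq_mod_pow2S s a b :
  0 < s -> a = b %[mod 2 ^ s] -> a ^ 2 = b ^ 2 %[mod 2 ^ s.+1].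
Proof.
move=> s0 /eq_mod_pow2S [] ab; first by rewrite -modnXm ab modnXm.
rewrite -modnXm ab modnXm; case: s s0 {ab} => // s _.
have -> : (b + 2 ^ s.+1) ^ 2 = b * 2 ^ s.+2 + 2 ^ s * 2 ^ s.+2 + b ^ 2.
  by rewrite !expnS; ring.
by rewrite -mulnDl modnMDl.
Qed.

Lemma expn_mod_sqr1 a d j : a ^ 2 = 1 %[mod d] -> a ^ j = 1 %[mod d] \/ a ^ j = a %[mod d].
Proof.
move=> a2; rewrite -(odd_double_half j) expnD -mul2n expnM -modnMmr -modnXm a2.
by rewrite modnXm exp1n modnMmr muln1; case: odd; [right | left].
Qed.

Lemma sqr_1_add_pow2 s w : (1 + 2 ^ s.+1 * w) ^ 2 = 1 + 2 ^ s.+2 * (w + 2 ^ s * w ^ 2).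
Proof. by rewrite !expnS; ring. Qed.

Lemma expn2X_1_add_pow2 t w d : 2 <= t -> odd w ->
  exists2 w', odd w' & (1 + 2 ^ t * w) ^ 2 ^ d = 1 + 2 ^ (t + d) * w'.
Proof.
case: t => // s s1 ow; elim: d => [|d [w' ow' IH]]; first by exists w; rewrite ?addn0.
exists (w' + 2 ^ (s + d) * w' ^ 2).
  by rewrite oddD ow' oddM oddX addn_eq0; case: s s1 {IH}.
by rewrite [2 ^ d.+1]expnSr expnM IH addnS addSn sqr_1_add_pow2.
Qed.

Lemma exists_mul_expn_mod_pow2 t w b y d : 2 <= t -> odd w -> odd b ->
  y = b %[mod 2 ^ t] -> exists k, b * (1 + 2 ^ t * w) ^ k = y %[mod 2 ^ (t + d)].
Proof.
move=> t2 ow ob yb; elim: d => [|d [k IH]]; first by exists 0; rewrite muln1 addn0.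
have [w' ow' cX] := expn2X_1_add_pow2 d t2 ow.
have oc : odd (1 + 2 ^ t * w) by rewrite oddD oddM oddX; case: t t2 {yb IH cX}.
case: (eq_mod_pow2S (esym IH)) => Hy; first by exists k; rewrite addnS.
(* Off by 2^(t+d): multiplying by c^(2^d) = 1 + 2^(t+d) * odd adds exactly that. *)
exists (k + 2 ^ d); rewrite addnS Hy expnD cX mulnA mulnDr muln1 mulnCA.
by rewrite -modnDmr pow2_mod_pow2S ?modnDmr // !oddM ob oddX oc ow' orbT.
Qed.

Definition v2sq (a : nat) : nat := logn 2 (a ^ 2 - 1).

Lemma logn2_mod4_2 n : n = 2 %[mod 4] -> logn 2 n = 1.
Proof.
move=> n4; have [k ->] : exists k, n = 2 * (2 * k + 1) by exists (n %/ 4); lia.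
by rewrite lognM ?addn1 // logn_prime // logn_coprime // coprime2n oddS oddM.
Qed.

Lemma odd_mod4 a : odd a -> a = 1 %[mod 4] \/ a = 3 %[mod 4].
Proof. by move=> oa; have := modn2 a; rewrite oa; lia. Qed.

Section Valuation.

Variable a : nat.
Hypotheses (oa : odd a) (a_gt1 : 1 < a).

Lemma v2sqE : v2sq a = logn 2 a.-1 + logn 2 a.+1.
Proof. by rewrite /v2sq -[X in _ - X](exp1n 2) subn_sqr lognM ?subn1 ?addn1 //; lia. Qed.

Lemma v2sq_mod4_1 : a = 1 %[mod 4] -> v2sq a = (logn 2 a.-1).+1.
Proof. by move=> a4; rewrite v2sqE (@logn2_mod4_2 a.+1) ?addn1 //; lia. Qed.

Lemma v2sq_mod4_3 : a = 3 %[mod 4] -> v2sq a = (logn 2 a.+1).+1.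
Proof. by move=> a4; rewrite v2sqE (@logn2_mod4_2 a.-1) //; lia. Qed.

Lemma v2sq_gt2 : 2 < v2sq a.
Proof.
have ge2 n : 0 < n -> n = 0 %[mod 4] -> 2 <= logn 2 n.
  by move=> n0 n4; rewrite -pfactor_dvdn //; apply/eqP; rewrite n4.
by case: (odd_mod4 oa) => a4; [rewrite v2sq_mod4_1 | rewrite v2sq_mod4_3] => //;
  rewrite ltnS ge2 //; lia.
Qed.

Lemma sqr_v2sq : exists2 w, odd w & a ^ 2 = 1 + 2 ^ v2sq a * w.
Proof.
have a2 : 0 < a ^ 2 - 1 by rewrite subn_gt0 -{1}(exp1n 2) ltn_exp2r.
have [w cw Ew] := pfactor_coprime (isT : prime 2) a2.
by exists w; [rewrite -coprime2n | rewrite mulnC -Ew subnKC // expn_gt0; lia].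
Qed.

Lemma sqr_mod_v2sq : a ^ 2 = 1 %[mod 2 ^ v2sq a].
Proof. by have [w _ ->] := sqr_v2sq; rewrite addnC mulnC modnMDl. Qed.

Lemma sqr_neq1_mod_v2sq : a ^ 2 != 1 %[mod 2 ^ (v2sq a).+1].
Proof.
have [w ow ->] := sqr_v2sq.
by rewrite -modnDmr pow2_mod_pow2S ?modnDmr // eq_sym neq_mod_add_pow2.
Qed.

Lemma neq1_mod_v2sq : a != 1 %[mod 2 ^ v2sq a].
Proof.
apply: contraNN sqr_neq1_mod_v2sq => /eqP/(sqr_eq_mod_pow2S _) -> //.
by have := v2sq_gt2; lia.
Qed.

End Valuation.

Definition cong1a (a t x : nat) : Prop := x = 1 %[mod 2 ^ t] \/ x = a %[mod 2 ^ t].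

Lemma cong1a_mod a t x y : x = y %[mod 2 ^ t] -> cong1a a t x <-> cong1a a t y.
Proof. by rewrite /cong1a => ->. Qed.

Lemma cong1a_eq_mod a b t : a = b %[mod 2 ^ t] -> cong1a a t = cong1a b t.
Proof. by rewrite /cong1a => ab; apply: funext => x; rewrite ab. Qed.

Lemma clos2_powset_sub a t x : a ^ 2 = 1 %[mod 2 ^ t] -> clos2 (powset a) x -> cong1a a t x.
Proof.
move=> a2 [_ /(_ t) [_ [[j [_ ->]] [k Ej]]]].
have xj : x = a ^ j %[mod 2 ^ t] by rewrite Ej addnC mulnC modnMDl.
by rewrite /cong1a xj; case: (expn_mod_sqr1 j a2) => ->; [left | right].
Qed.

Lemma cong1a_sub_clos2 a t w x : odd a -> 2 <= t -> odd w -> a ^ 2 = 1 + 2 ^ t * w ->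
  cong1a a t x -> clos2 (powset a) x.
Proof.
move=> oa t2 ow a2 Hx.
have [j [j0 xj]] : exists j, 0 < j /\ x = a ^ j %[mod 2 ^ t].
  case: Hx => xa; [exists 2 | exists 1]; rewrite xa //.
  by rewrite a2 addnC mulnC modnMDl.
split.
  by rewrite (odd_eq_mod_pow2 _ xj) ?oddX ?oa ?orbT //; lia.
(* Lift x modulo 2^M with x < 2^M: the power found is then x plus a multiple of 2^M. *)
move=> m; pose M := t + (m + x).
have oaj : odd (a ^ j) by rewrite oddX oa orbT.
have [k] := exists_mul_expn_mod_pow2 (m + x) t2 ow oaj xj.
rewrite -/M -a2 -expnM -expnD; set s := a ^ _ => sx.
have xM : x < 2 ^ M.
  by apply: leq_trans (ltn_expl x (isT : 1 < 2)) _; rewrite leq_exp2l // /M; lia.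
rewrite (modn_small xM) in sx.
exists s; split; first by exists (j + 2 * k); split => //; lia.
exists (s %/ 2 ^ M * 2 ^ (t + x)).
by rewrite {1}(divn_eq s (2 ^ M)) sx /M addnCA expnD; ring.
Qed.

Lemma clos2_powset a : odd a -> 1 < a -> clos2 (powset a) = cong1a a (v2sq a).
Proof.
move=> oa a1; have [w ow a2] := sqr_v2sq oa a1.
apply: funext => x; apply: propext; split; first exact/clos2_powset_sub/sqr_mod_v2sq.
exact: cong1a_sub_clos2 oa (ltnW (v2sq_gt2 oa a1)) ow a2.
Qed.

Lemma inZp_eq_mod n x y : 1 < n -> (inZp x == inZp y :> 'Z_n) = (x == y %[mod n]).
Proof. by move=> n1; rewrite -val_eqE /= Zp_cast. Qed.

Lemma pisetP X m r : reflect (exists2 x, X x & inZp x = r) (r \in piset X m).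
Proof. by rewrite inE; apply: (iffP (asboolP _)) => [[x [Xx <-]] | [x Xx <-]]; exists x. Qed.

Lemma piunitsE X n u : (u \in piunits X n) = (val u \in piset X n).
Proof. by rewrite inE. Qed.

Lemma nX_eq X n : nprop X n -> (forall m, nprop X m -> n <= m) -> nX X = n.
Proof.
move=> Xn n_min; have [] := epsilon_spec (inhabits 0)
  (fun m => nprop X m /\ forall k, nprop X k -> m <= k) (ex_intro _ n (conj Xn n_min)).
by rewrite -/(nX X) => /n_min le_n le_X; apply/eqP; rewrite eqn_leq le_n le_X.
Qed.

Lemma piunits_group X n : X 1 -> (forall x y, X x -> X y -> X (x * y)) ->
  group_set (piunits X n).
Proof.
move=> X1 XM; apply/group_setP; split; first by rewrite piunitsE; apply/pisetP; exists 1.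
move=> u v; rewrite !piunitsE => /pisetP [x Xx ux] /pisetP [y Xy vy]; apply/pisetP.
exists (x * y); first exact: XM.
by apply: val_inj; rewrite FinRing.val_unitM -ux -vy /= modnMm.
Qed.

Lemma card_piunits X n : 0 < n -> (forall x, X x -> odd x) ->
  #|piunits X n| = #|piset X n|.
Proof.
move=> n0 Xodd; rewrite -(card_imset _ val_inj); apply: eq_card => r.
apply/imsetP/idP => [[u] | Xr]; first by rewrite piunitsE => ? ->.
have /pisetP [x Xx xr] := Xr.
have ur : r \is a GRing.unit.
  by rewrite -xr -Zp_nat unitZpE ?coprime_pexpl ?coprime2n ?Xodd // -{1}(expn0 2) ltn_exp2l.
by exists (Sub r ur); rewrite ?piunitsE SubK.
Qed.

Lemma index_piunits X n : 0 < n -> group_set (piunits X n) ->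
  #|piunits X n| * #|units_Zp (2 ^ n) : piunits X n|%g = 2 ^ n.-1.
Proof.
move=> n0 gX; rewrite -[piunits X n]/(gval (Group gX)) Lagrange ?subsetT //.
by rewrite card_units_Zp ?expn_gt0 // totient_pfactor // mul1n.
Qed.

Section Cong1aIndex.

Variables a t : nat.
Hypotheses (oa : odd a) (a2 : a ^ 2 = 1 %[mod 2 ^ t]) (a_neq1 : a != 1 %[mod 2 ^ t]).

Let t_gt0 : 0 < t.
Proof. by move: a_neq1; rewrite lt0n; apply: contraNneq => ->; rewrite !modn1. Qed.

Let pow2S_gt1 : 1 < 2 ^ t.+1.
Proof. by rewrite -{1}(expn0 2) ltn_exp2l. Qed.

Lemma cong1a_odd x : cong1a a t x -> odd x.
Proof. by case=> /(odd_eq_mod_pow2 t_gt0) ->. Qed.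

Lemma cong1a_mul x y : cong1a a t x -> cong1a a t y -> cong1a a t (x * y).
Proof.
rewrite /cong1a -modnMm => [[] -> [] ->]; rewrite modnMm ?muln1 ?mul1n;
  [by left | by right | by right | by rewrite mulnn; left].
Qed.

Lemma card_piset_cong1a_le m : 0 < m -> m <= t -> #|piset (cong1a a t) m| <= 2.
Proof.
move=> m0 mt; have m1 : 1 < 2 ^ m by rewrite -{1}(expn0 2) ltn_exp2l.
have sub : piset (cong1a a t) m \subset [set inZp 1; inZp a].
  apply/subsetP => r /pisetP [x Xx <-]; rewrite !inE !inZp_eq_mod //.
  by case: Xx => /(eq_mod_pow2_le mt)/eqP ->; rewrite ?orbT.
by apply: leq_trans (subset_leq_card sub) _; rewrite cards2 ltnS leq_b1.
Qed.

Lemma piset_cong1aS :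
  piset (cong1a a t) t.+1 =i [:: inZp 1; inZp (1 + 2 ^ t); inZp a; inZp (a + 2 ^ t)].
Proof.
move=> r; apply/pisetP/idP => [[x Xx <-] | ].
  rewrite !inE !inZp_eq_mod //.
  by case: Xx => /eq_mod_pow2S [] /eqP ->; rewrite ?orbT.
rewrite !inE => /or4P [] /eqP ->.
- by exists 1; [left|].
- by exists (1 + 2 ^ t); [left; rewrite modnDr|].
- by exists a; [right|].
- by exists (a + 2 ^ t); [right; rewrite modnDr|].
Qed.

Lemma card_piset_cong1aS : #|piset (cong1a a t) t.+1| = 4.
Proof.
rewrite (eq_card piset_cong1aS); apply/card_uniqP.
have ne u v : u = 1 %[mod 2 ^ t] -> v = a %[mod 2 ^ t] -> u != v %[mod 2 ^ t.+1].
  move=> u1 va; apply: contra a_neq1 => /eqP/(eq_mod_pow2_le (leqnSn t)).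
  by rewrite u1 va eq_sym => ->.
by rewrite /= !inE !negb_or !inZp_eq_mod // !neq_mod_add_pow2 !ne ?modnDr.
Qed.

Lemma nX_cong1a : nX (cong1a a t) = t.+1.
Proof.
have Xt : nprop (cong1a a t) t.+1.
  split=> //; split=> [y _ | ]; last by rewrite card_piset_cong1aS.
  split=> [Xy | [x [Xx /eqP]]]; first by exists y.
  by rewrite inZp_eq_mod // => /eqP/(eq_mod_pow2_le (leqnSn t))/cong1a_mod ->.
apply: (nX_eq Xt) => m [m0 [_ m3]]; rewrite ltnNge; apply/negP => mt.
by have := card_piset_cong1a_le m0 mt; lia.
Qed.

Lemma iX_cong1a : 4 * iX (cong1a a t) = 2 ^ t.
Proof.
rewrite /iX nX_cong1a -card_piset_cong1aS -card_piunits //; last exact: cong1a_odd.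
apply: index_piunits => //; apply: piunits_group; last exact: cong1a_mul.
by left.
Qed.

End Cong1aIndex.

Lemma v2sq_le_eq_mod a b : odd a -> 1 < a -> odd b -> 1 < b ->
  a = b %[mod 2 ^ v2sq b] -> v2sq a <= v2sq b.
Proof.
move=> oa a1 ob b1 ab; rewrite leqNgt; apply/negP => lt_ba.
have := eq_mod_pow2_le lt_ba (sqr_mod_v2sq oa a1).
rewrite (sqr_eq_mod_pow2S _ ab) => [/eqP|]; first by apply/negP; apply: sqr_neq1_mod_v2sq.
by have := v2sq_gt2 ob b1; lia.
Qed.

Lemma eq_mod4_pow2 k x y : 2 <= k -> x = y %[mod 2 ^ k] -> x = y %[mod 4].
Proof. exact: eq_mod_pow2_le. Qed.

Section Mod4.

Variable a : nat.
Hypotheses (oa : odd a) (a_gt1 : 1 < a).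
Local Notation t := (v2sq a).

Lemma cong1a_mod4_1 x : a = 1 %[mod 4] -> cong1a a t x <-> x = 1 %[mod 2 ^ t.-1].
Proof.
move=> a4; have t_def := v2sq_mod4_1 oa a_gt1 a4.
have a1 : a = 1 %[mod 2 ^ t.-1].
  by apply/eqP; rewrite eqn_mod_dvd 1?ltnW // subn1 t_def pfactor_dvdnn.
split=> [[] /(eq_mod_pow2_le (leq_pred t)) -> // | ].
have tS : t.-1.+1 = t by rewrite t_def.
move=> /eq_mod_pow2S; rewrite tS => -[x1 | xS]; first by left.
right; rewrite xS; move: (eq_mod_pow2S a1); rewrite tS => -[a1t | -> //].
by move: (neq1_mod_v2sq oa a_gt1); rewrite a1t eqxx.
Qed.

Lemma cong1a_mod4_3 x : a = 3 %[mod 4] -> x = 1 %[mod 4] ->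
  cong1a a t x <-> x = 1 %[mod 2 ^ t].
Proof.
move=> a4 x4; split=> [[] // xa | ]; last by left.
by move: x4; rewrite (eq_mod4_pow2 (ltnW (v2sq_gt2 oa a_gt1)) xa) a4.
Qed.

End Mod4.

Section Inclusion.

Variables a b : nat.
Hypotheses (oa : odd a) (a_gt1 : 1 < a) (ob : odd b) (b_gt1 : 1 < b).
Local Notation X := (cong1a a (v2sq a)).
Local Notation Y := (cong1a b (v2sq b)).
Hypotheses (XY : forall x, X x -> Y x) (X_neq_Y : X <> Y).

Lemma cong1a_psub_mod4 : a = 1 %[mod 4].
Proof.
case: (odd_mod4 oa) => // a4; exfalso.
have ta2 := v2sq_gt2 oa a_gt1; have tb2 := v2sq_gt2 ob b_gt1.
have Ya : Y a by apply: XY; right.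
case: (odd_mod4 ob) => b4.
  by move: Ya => /(cong1a_mod4_1 ob b_gt1 _ b4)/(eq_mod4_pow2 _); rewrite a4; lia.
have le_ba : v2sq b <= v2sq a.
  apply: pow2_le_of_mod1 => x x1; have x4 := eq_mod4_pow2 (ltnW ta2) x1.
  by apply/(cong1a_mod4_3 ob b_gt1 b4 x4)/XY/(cong1a_mod4_3 oa a_gt1 a4 x4).
have ab : a = b %[mod 2 ^ v2sq b].
  by case: Ya => // a1; move: a4; rewrite (eq_mod4_pow2 (ltnW tb2) a1).
have le_ab := v2sq_le_eq_mod oa a_gt1 ob b_gt1 ab.
apply: X_neq_Y; have -> : v2sq a = v2sq b by apply/eqP; rewrite eqn_leq le_ab.
exact: cong1a_eq_mod.
Qed.

Lemma cong1a_psub_lt : v2sq b < v2sq a.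
Proof.
have a4 := cong1a_psub_mod4; have ta2 := v2sq_gt2 oa a_gt1; have tb2 := v2sq_gt2 ob b_gt1.
have Xa x : x = 1 %[mod 2 ^ (v2sq a).-1] -> X x by move/(cong1a_mod4_1 oa a_gt1 _ a4).
case: (odd_mod4 ob) => b4.
  have Yb x : Y x <-> x = 1 %[mod 2 ^ (v2sq b).-1] := cong1a_mod4_1 ob b_gt1 x b4.
  have le_ba : (v2sq b).-1 <= (v2sq a).-1.
    by apply: pow2_le_of_mod1 => x /Xa/XY/Yb.
  suff : v2sq a <> v2sq b by lia.
  move=> tab; apply: X_neq_Y; apply: funext => x; apply: propext.
  by rewrite (cong1a_mod4_1 oa a_gt1 _ a4) Yb tab.
suff : v2sq b <= (v2sq a).-1 by lia.
apply: pow2_le_of_mod1 => x x1; have x4 : x = 1 %[mod 4] by apply: eq_mod4_pow2 x1; lia.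
exact/(cong1a_mod4_3 ob b_gt1 b4 x4)/XY/Xa.
Qed.

End Inclusion.

Lemma cong1a_sub_of_lt a b : odd a -> 1 < a -> a = 1 %[mod 4] -> v2sq b < v2sq a ->
  forall x, cong1a a (v2sq a) x -> cong1a b (v2sq b) x.
Proof.
move=> oa a1 a4 lt_ba x /(cong1a_mod4_1 oa a1 _ a4) x1; left.
by apply: eq_mod_pow2_le x1; lia.
Qed.

Lemma cong1a_1mod4_iff a : odd a -> 1 < a ->
  (forall x, cong1a a (v2sq a) x -> exists k, x = 1 + 4 * k) <-> a = 1 %[mod 4].
Proof.
move=> oa a1; split=> [/(_ a (or_intror (erefl _))) [k ->] | a4 x]; first by lia.
move/(cong1a_mod4_1 oa a1 _ a4)/eq_mod4_pow2 => x4.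
have {}x4 : x = 1 %[mod 4] by apply: x4; have := v2sq_gt2 oa a1; lia.
by exists (x %/ 4); lia.
Qed.

Lemma iX_cong1a_v2sq a : odd a -> 1 < a -> 4 * iX (cong1a a (v2sq a)) = 2 ^ v2sq a.
Proof.
by move=> oa a1; rewrite iX_cong1a ?sqr_mod_v2sq ?neq1_mod_v2sq.
Qed.

Theorem lemma4p8 (X Y : nat -> Prop) :
  inX2 X -> inX2 Y -> X <> Y ->
  ((forall x, X x -> Y x) <->
   ((forall x, X x -> exists k : nat, x = 1 + 4 * k) /\ (iX Y < iX X)%N)).
Proof.
have gt1 c : odd c -> c <> 1 -> 1 < c by case: c => [|[]].
move=> [a [oa [/(gt1 a oa) a1 ->]]] [b [ob [/(gt1 b ob) b1 ->]]].
rewrite !clos2_powset // => X_neq_Y.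
have -> : (iX (cong1a b (v2sq b)) < iX (cong1a a (v2sq a))) = (v2sq b < v2sq a).
  by rewrite -(ltn_pmul2l (isT : 0 < 4)) !iX_cong1a_v2sq // ltn_exp2l.
rewrite cong1a_1mod4_iff //; split=> [XY | [a4 lt_ba]]; last exact: cong1a_sub_of_lt.
by split; [exact: cong1a_psub_mod4 XY X_neq_Y | exact: cong1a_psub_lt XY X_neq_Y].
Qed.
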